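(* Let $\xi$ be a random index and $\{\mu_\xi\}$ probability measures on $\mathbb{R}^d$ with $\mu_\xi\propto\exp(-V_\xi)$ such that for every $\xi$, $\log\mu_\xi$ is $L_1$-Lipschitz and $\nabla\log\mu_\xi$ is $L_2$-Lipschitz, and let $\mu\propto\exp(\mathbb{E}_\xi[\log\mu_\xi])$. Then for any probability measure $\pi_t$ on $\mathbb{R}^d$, $$\mathbb{E}_{\pi_t}\big[\mathrm{tr}^+(\nabla^2\log\mu)\big]\le dL_2,\qquad \sup_{\boldsymbol{x}}\|\nabla\cdot\Sigma_{\rm SGD}(\boldsymbol{x})\|\le4(d+1)L_1L_2,\qquad \sup_{\boldsymbol{x}}\lambda_{\max}(\Sigma_{\rm SGD}(\boldsymbol{x}))\le4L_1^2,$$ where $\Sigma_{\rm SGD}(\boldsymbol{x})=\mathbb{E}_\xi[(\nabla\log\mu_\xi(\boldsymbol{x})-\nabla\mathbb{E}_\xi[\log\mu_\xi(\boldsymbol{x})])(\nabla\log\mu_\xi(\boldsymbol{x})-\nabla\mathbb{E}_\xi[\log\mu_\xi(\boldsymbol{x})])^\top]$.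
   Context: $\mathrm{tr}^+(A)$ denotes the sum of the absolute values of the eigenvalues of a symmetric matrix $A$. For a matrix field $\Sigma$, $\nabla\cdot\Sigma$ is the vector field with $i$-th component $\sum_j\partial_j\Sigma_{ij}$, and $\|\cdot\|$ is the Euclidean norm. $\lambda_{\max}$ is the largest eigenvalue. $\log\mu$, $\log\mu_\xi$ denote log-densities. *)

From HB Require Import structures.
From mathcomp Require Import all_boot all_order all_algebra.
From mathcomp Require Import all_classical all_reals all_analysis.
Set Implicit Arguments. Unset Strict Implicit. Unset Printing Implicit Defensive.
Import Order.TTheory GRing.Theory Num.Theory.
Import numFieldNormedType.Exports.
Local Open Scope classical_set_scope.
Local Open Scope ring_scope.

Section Defs.
Variables (R : realType) (d : nat).

Definition evec (i : 'I_d) : 'rV[R]_d := delta_mx 0 i.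

(* Euclidean norm (the library norm on matrices is the max norm). *)
Definition enorm (v : 'rV[R]_d) : R := Num.sqrt (\sum_(i < d) v 0 i ^+ 2).

Definition partial (f : 'rV[R]_d -> R) (i : 'I_d) (x : 'rV[R]_d) : R :=
  'D_(evec i) f x.

Definition grad (f : 'rV[R]_d -> R) (x : 'rV[R]_d) : 'rV[R]_d :=
  \row_i partial f i x.

Definition hess (f : 'rV[R]_d -> R) (x : 'rV[R]_d) : 'M[R]_d :=
  \matrix_(i, j) partial (fun y => partial f i y) j x.

Definition mxdiv (S : 'rV[R]_d -> 'M[R]_d) (x : 'rV[R]_d) : 'rV[R]_d :=
  \row_i \sum_(j < d) partial (fun y => S y i j) j x.

(* tr^+(A): sum of |eigenvalues| of A counted with (algebraic) multiplicity,
   i.e. sum of |l_i| where char_poly A = prod_i ('X - l_i).  The multiset of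
   roots is unique; for a real symmetric matrix such an l exists.
   (Convention 0 if the characteristic polynomial does not split over R.) *)
Definition trplus (A : 'M[R]_d) : R :=
  match pselect (exists l : 'I_d -> R,
                   char_poly A = \prod_(i < d) ('X - (l i)%:P)) with
  | left h => \sum_(i < d) `|projT1 (cid h) i|
  | right _ => 0
  end.

Definition lambda_max (A : 'M[R]_d) : R := sup [set a | eigenvalue A a].

End Defs.

Notation Rd R d := (g_sigma_algebraType (@open 'rV[R]_d)).

(* Differentiating under the integral sign, which the uniform bounds implied
   by the Lipschitz hypotheses justify, shows that grad E[log mu_xi] is the
   average of the grad log mu_xi and that its directional derivatives are the
   averages of theirs.  Hence all these gradients have norm at most L1, and
   their derivatives in a direction v have norm at most L2 |v|.  The quadratic
   form of the hessian of log mu is therefore bounded by L2 |w|^2, so every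
   eigenvalue has modulus at most L2 and tr^+ <= d L2 pointwise.  The
   deviation dev = grad log mu_xi - grad E[log mu_xi] has norm at most 2 L1
   and its Jacobian J is bounded by 2 L2.  Thus Sigma_SGD = E[dev dev^T] has
   quadratic form at most 4 L1^2 |w|^2, and by the product rule its
   divergence is E[tr(J) dev + J dev], of norm at most
   2 d L2 * 2 L1 + 2 L2 * 2 L1. *)

From HB Require Import structures.
From mathcomp Require Import all_boot all_order all_algebra.
From mathcomp Require Import all_classical all_reals all_analysis.
From mathcomp Require Import ring lra.
Import Order.TTheory GRing.Theory Num.Theory.
Import numFieldNormedType.Exports.
Local Open Scope classical_set_scope.
Local Open Scope ring_scope.

Set Implicit Arguments. Unset Strict Implicit. Unset Printing Implicit Defensive.

Section Euclid.
Variables (R : realType) (d : nat).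
Local Notation V := 'rV[R]_d.
Implicit Types (u v w : V) (A : 'M[R]_d) (i : 'I_d).

Definition dot u v : R := \sum_(i < d) u 0 i * v 0 i.

Lemma dot_row u (F : 'I_d -> R) : dot u (\row_i F i) = \sum_(i < d) u 0 i * F i.
Proof. by apply: eq_bigr => i _; rewrite mxE. Qed.

Lemma dotNl u v : dot (- u) v = - dot u v.
Proof. by rewrite /dot -sumrN; apply: eq_bigr => i _; rewrite mxE mulNr. Qed.

Lemma dotDr u v w : dot u (v + w) = dot u v + dot u w.
Proof. by rewrite /dot -big_split; apply: eq_bigr => i _; rewrite mxE mulrDr. Qed.

Lemma dotZr c u v : dot u (c *: v) = c * dot u v.
Proof. by rewrite /dot mulr_sumr; apply: eq_bigr => i _; rewrite mxE mulrCA. Qed.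

Lemma dot_ge0 v : 0 <= dot v v.
Proof. by apply: sumr_ge0 => i _; rewrite -expr2 sqr_ge0. Qed.

Lemma dot_eq0 v : (dot v v == 0) = (v == 0).
Proof.
apply/eqP/eqP => [v0|->]; last by rewrite /dot big1 // => i _; rewrite mxE mul0r.
apply/rowP => i; rewrite mxE.
have sq_ge0 j : xpredT j -> 0 <= v 0 j * v 0 j by rewrite -expr2 sqr_ge0.
by have /eqP := @psumr_eq0P _ _ xpredT _ sq_ge0 v0 i isT; rewrite mulf_eq0 orbb => /eqP.
Qed.

Lemma dot_gt0 v : v != 0 -> 0 < dot v v.
Proof. by rewrite lt0r dot_eq0 dot_ge0 andbT. Qed.

Lemma enorm_ge0 v : 0 <= enorm v.
Proof. exact: sqrtr_ge0. Qed.

Lemma enorm_sqr v : enorm v ^+ 2 = dot v v.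
Proof.
rewrite sqr_sqrtr; last by apply: sumr_ge0 => i _; rewrite sqr_ge0.
by apply: eq_bigr => i _; rewrite expr2.
Qed.

Lemma enorm_eq0 v : (enorm v == 0) = (v == 0).
Proof. by rewrite -sqrf_eq0 enorm_sqr dot_eq0. Qed.

Lemma enormN v : enorm (- v) = enorm v.
Proof. by congr Num.sqrt; apply: eq_bigr => i _; rewrite mxE sqrrN. Qed.

Lemma enormZ c v : enorm (c *: v) = `|c| * enorm v.
Proof.
rewrite /enorm -sqrtr_sqr -sqrtrM ?sqr_ge0 //; congr Num.sqrt.
by rewrite mulr_sumr; apply: eq_bigr => i _; rewrite mxE exprMn.
Qed.

Lemma enorm_evec i : enorm (evec R i) = 1.
Proof.
rewrite /enorm (bigD1 i) //= big1 ?addr0 /evec ?mxE ?eqxx ?expr1n ?sqrtr1 //.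
by move=> j /negPf ji; rewrite mxE ji andbF expr0n.
Qed.

Lemma normr_coord_le_enorm v i : `|v 0 i| <= enorm v.
Proof.
rewrite -sqrtr_sqr; apply: ler_wsqrtr.
by rewrite (bigD1 i) //= lerDl; apply: sumr_ge0 => j _; exact: sqr_ge0.
Qed.

Lemma dot_le_enorm u v : dot u v <= enorm u * enorm v.
Proof.
have [->|u0] := eqVneq u 0.
  by rewrite /dot big1 ?mulr_ge0 ?enorm_ge0 // => i _; rewrite mxE mul0r.
have [->|v0] := eqVneq v 0.
  by rewrite /dot big1 ?mulr_ge0 ?enorm_ge0 // => i _; rewrite mxE mulr0.
set a := enorm u; set b := enorm v.
have ab_gt0 : 0 < a * b by rewrite mulr_gt0 // lt0r enorm_eq0 ?u0 ?v0 enorm_ge0.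
have : 0 <= \sum_(i < d) (b * u 0 i - a * v 0 i) ^+ 2.
  by apply: sumr_ge0 => i _; rewrite sqr_ge0.
have -> : \sum_(i < d) (b * u 0 i - a * v 0 i) ^+ 2 =
    b ^+ 2 * dot u u - 2 * a * b * dot u v + a ^+ 2 * dot v v.
  by rewrite /dot !mulr_sumr -sumrB -big_split /=; apply: eq_bigr => i _; ring.
rewrite -!enorm_sqr -/a -/b => h.
by rewrite -(ler_pM2l ab_gt0); nra.
Qed.

Lemma normr_dot_le u v : `|dot u v| <= enorm u * enorm v.
Proof.
by rewrite ler_norml dot_le_enorm andbT lerNl -dotNl -(enormN u) dot_le_enorm.
Qed.

Lemma enorm_le_dual w K : 0 <= K -> (forall u, dot u w <= K * enorm u) ->
  enorm w <= K.
Proof.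
move=> K0 /(_ w); rewrite -enorm_sqr expr2.
have [->|w0] := eqVneq (enorm w) 0; first by [].
by rewrite [K * _]mulrC ler_pM2l // lt0r w0 enorm_ge0.
Qed.

Lemma enormD u v : enorm (u + v) <= enorm u + enorm v.
Proof.
apply: enorm_le_dual => [|w]; first by rewrite addr_ge0 ?enorm_ge0.
rewrite dotDr mulrDl [_ * enorm w]mulrC [enorm v * _]mulrC.
by apply: lerD; apply: dot_le_enorm.
Qed.

Lemma enormB u v : enorm (u - v) <= enorm u + enorm v.
Proof. by rewrite -(enormN v); apply: enormD. Qed.

Lemma dot_eigenvector A a w : w *m A = a *: w -> dot w (w *m A) = a * dot w w.
Proof. by move=> ->; rewrite dotZr. Qed.

Lemma eigenvalue_le A a K : eigenvalue A a ->
  (forall w, dot w (w *m A) <= K * dot w w) -> a <= K.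
Proof.
case/eigenvalueP => w wA w0 /(_ w).
by rewrite (dot_eigenvector wA) ler_pM2r // dot_gt0.
Qed.

Lemma normr_eigenvalue_le A a K : eigenvalue A a ->
  (forall w, `|dot w (w *m A)| <= K * dot w w) -> `|a| <= K.
Proof.
case/eigenvalueP => w wA w0 /(_ w).
by rewrite (dot_eigenvector wA) normrM (ger0_norm (dot_ge0 w)) ler_pM2r // dot_gt0.
Qed.

Lemma dot_mulmx_trmx w A : dot w (w *m A^T) = dot w (w *m A).
Proof.
rewrite /dot; under eq_bigr => i _ do rewrite mxE mulr_sumr.
under [RHS]eq_bigr => j _ do rewrite mxE mulr_sumr.
rewrite exchange_big; apply: eq_bigr => j _; apply: eq_bigr => i _.
by rewrite mxE; ring.
Qed.

Lemma trplus_ge0 A : 0 <= trplus A.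
Proof. by rewrite /trplus; case: pselect => // h; apply: sumr_ge0. Qed.

Lemma trplus_le A K : 0 <= K -> (forall a, eigenvalue A a -> `|a| <= K) ->
  trplus A <= d%:R * K.
Proof.
move=> K0 ev_le; rewrite /trplus; case: pselect => [h|_]; last by rewrite mulr_ge0.
case: (cid h) => /= l charA.
have -> : d%:R * K = \sum_(i < d) K by rewrite sumr_const card_ord mulr_natl.
apply: ler_sum => i _; apply: ev_le.
rewrite eigenvalue_root_char charA /root (bigD1 i) //=.
by rewrite hornerM hornerXsubC subrr mul0r.
Qed.

Lemma lambda_max_le A K : 0 <= K -> (forall a, eigenvalue A a -> a <= K) ->
  lambda_max A <= K.
Proof.
move=> K0 ev_le; rewrite /lambda_max.
have [ne|] := pselect ([set a | eigenvalue A a] !=set0); first exact: ge_sup.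
by move/set0P/negP/negbNE/eqP->; rewrite sup0.
Qed.

End Euclid.

Section Directional.
Variables (R : realType) (d : nat).
Local Notation V := 'rV[R]_d.
Implicit Types (f : V -> R) (x y v : V) (i : 'I_d).

Lemma line_quotientE f x v (t : R) :
  (fun h : R => h^-1 *: (((fun s : R => f (s *: v + x)) \o shift t) (h *: 1)
      - (fun s : R => f (s *: v + x)) t)) =
  (fun h : R => h^-1 *: ((f \o shift (t *: v + x)) (h *: v) - f (t *: v + x))).
Proof.
apply/funext => h /=; congr (_ *: (_ - _)); congr f.
by rewrite [h *: 1]mulr1 scalerDl addrA.
Qed.

Lemma derivable_line f x v (t : R) :
  derivable (fun s : R => f (s *: v + x)) t 1 <-> derivable f (t *: v + x) v.
Proof. by rewrite /derivable line_quotientE. Qed.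

Lemma derive_line f x v (t : R) :
  'D_1 (fun s : R => f (s *: v + x)) t = 'D_v f (t *: v + x).
Proof. by rewrite /derive line_quotientE. Qed.

Lemma derive_coord_sum f y v : differentiable f y ->
  'D_v f y = \sum_(i < d) v 0 i * 'D_(evec R i) f y.
Proof.
move=> df; rewrite deriveE // {1}(row_sum_delta v) linear_sum.
by apply: eq_bigr => i _; rewrite linearZ deriveE.
Qed.

Lemma normr_derive_le f y v C : derivable f y v ->
  (forall h : R, h != 0 -> `|f (h *: v + y) - f y| <= C * `|h|) ->
  `|'D_v f y| <= C.
Proof.
move=> df f_lip; set q := fun h : R => h^-1 *: ((f \o shift y) (h *: v) - f y).
have /cvgrPdist_le q_cvg : q @ (0 : R)^' --> 'D_v f y := df.
apply/ler_addgt0Pr => e e0; near (0 : R)^' => h.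
have h0 : h != 0 by near: h; exact: nbhs_dnbhs_neq.
have q_le : `|q h| <= C.
  rewrite normrZ normfV -(@ler_pM2l _ `|h|) ?normr_gt0 //.
  by rewrite mulrA mulfV ?normr_eq0 // mul1r mulrC; exact: f_lip.
have Dq_le : `|'D_v f y - q h| <= e by near: h; exact: q_cvg.
by have := ler_normD ('D_v f y - q h) (q h); rewrite subrK; lra.
Unshelve. all: by end_near.
Qed.

Lemma derive_lin_comb (g : 'I_d -> V -> R) (m : 'I_d -> R) y v :
  (forall i, derivable (g i) y v) ->
  derivable (fun z => \sum_(i < d) m i * g i z) y v /\
  'D_v (fun z => \sum_(i < d) m i * g i z) y = \sum_(i < d) m i * 'D_v (g i) y.
Proof.
move=> dg; have -> : (fun z => \sum_(i < d) m i * g i z) = \sum_(i < d) m i *: g i.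
  by apply/funext => z; rewrite fct_sumE.
split; first by apply: derivable_sum => i; apply: derivableZ.
rewrite derive_sum; last by move=> i; apply: derivableZ.
by apply: eq_bigr => i _; rewrite deriveZ.
Qed.

Lemma enorm_row_derive_le (g : 'I_d -> V -> R) y v K : 0 <= K ->
  (forall i, derivable (g i) y v) ->
  (forall t : R, t != 0 -> enorm (\row_i (g i (t *: v + y) - g i y)) <= K * `|t|) ->
  enorm (\row_i 'D_v (g i) y) <= K.
Proof.
move=> K0 dg g_lip; apply: enorm_le_dual => // m.
have [dmg Dmg] := derive_lin_comb (fun i => m 0 i) dg.
rewrite dot_row -Dmg mulrC; apply: le_trans (ler_norm _) (normr_derive_le dmg _).
move=> t t0; rewrite -sumrB.
under eq_bigr => i _ do rewrite -mulrBr.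
rewrite -dot_row; apply: le_trans (normr_dot_le _ _) _.
by rewrite -mulrA ler_wpM2l ?enorm_ge0 ?g_lip.
Qed.

Lemma differentiable_partial f y i : differentiable (grad f) y ->
  differentiable (partial f i) y.
Proof.
move=> dgrad; have -> : partial f i = (fun M : 'rV[R]_d => M 0 i) \o grad f.
  by apply/funext => z; rewrite /= mxE.
exact: differentiable_comp dgrad (differentiable_coord _ 0 i).
Qed.

Lemma partial_subr_cst f c i y : derivable f y (evec R i) ->
  partial (fun x => f x - c) i y = partial f i y.
Proof.
move=> df; rewrite /partial (_ : (fun x => f x - c) = f - cst c) //.
by rewrite deriveB ?derive_cst ?subr0.
Qed.

Lemma hess_subr_cst f c : (forall y i, derivable f y (evec R i)) ->
  hess (fun x => f x - c) = hess f.
Proof.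
move=> df; apply/funext => y; apply/matrixP => i j; rewrite !mxE.
by congr (partial _ j y); apply/funext => z; rewrite partial_subr_cst.
Qed.

End Directional.

Section Expectation.
Variables (R : realType) (dT : measure_display) (T : measurableType dT).
Variable P : probability T R.
Implicit Types (phi psi : T -> R).

Definition Pint phi := P.-integrable setT (EFin \o phi).

Lemma Pint_measurable phi : Pint phi -> measurable_fun setT phi.
Proof. by case/integrableP => /measurable_realfun.measurable_EFinP. Qed.

Lemma Pint_bounded phi M : measurable_fun setT phi ->
  (forall xi, `|phi xi| <= M) -> Pint phi.
Proof.
move=> mphi phi_le; apply: measurable_bounded_integrable => //.
  by apply: le_lt_trans (probability_le1 P measurableT) _; exact: ltry.
exists M; split; first by rewrite num_real.
by move=> M' MM' x _; apply: le_trans (phi_le x) _; apply: ltW.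
Qed.

Lemma Pint_cst c : Pint (fun _ => c).
Proof. by apply: (@Pint_bounded _ `|c|) => // xi; exact: measurable_cst. Qed.

Lemma PintD phi psi : Pint phi -> Pint psi -> Pint (fun xi => phi xi + psi xi).
Proof. exact: integrableD. Qed.

Lemma PintZ c phi : Pint phi -> Pint (fun xi => c * phi xi).
Proof. exact: integrableZl. Qed.

Lemma PintB phi psi : Pint phi -> Pint psi -> Pint (fun xi => phi xi - psi xi).
Proof. exact: integrableB. Qed.

Lemma PintM phi psi M N : Pint phi -> Pint psi ->
  (forall xi, `|phi xi| <= M) -> (forall xi, `|psi xi| <= N) ->
  Pint (fun xi => phi xi * psi xi).
Proof.
move=> iphi ipsi phi_le psi_le; apply: (@Pint_bounded _ (M * N)).
  by apply: measurable_realfun.measurable_funM; apply: Pint_measurable.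
by move=> xi; rewrite normrM ler_pM.
Qed.

Lemma Pint_sum n (phi : 'I_n -> T -> R) : (forall i, Pint (phi i)) ->
  Pint (fun xi => \sum_(i < n) phi i xi).
Proof.
move=> iphi; rewrite /Pint (_ : _ \o _ = fun x => \sum_(i < n) (EFin \o phi i) x).
  by apply: (@integrable_sum _ _ _ P _ measurableT _ _ xpredT) => i _; exact: iphi.
by apply/funext => x /=; rewrite -sumEFin.
Qed.

Lemma Rintegral_prob_cst c : \int[P]_xi c = c.
Proof.
rewrite Rintegral_cst // -[RHS]mulr1; congr (_ * _).
by rewrite -[RHS]/(fine 1%E); congr fine; exact: probability_setT.
Qed.

Lemma Rintegral_sum n (phi : 'I_n -> T -> R) : (forall i, Pint (phi i)) ->
  \int[P]_xi (\sum_(i < n) phi i xi) = \sum_(i < n) \int[P]_xi phi i xi.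
Proof.
elim: n phi => [|n IH] phi iphi.
  rewrite big_ord0; under eq_Rintegral do rewrite big_ord0.
  exact: Rintegral_prob_cst.
rewrite big_ord_recr /=; under eq_Rintegral do rewrite big_ord_recr /=.
rewrite RintegralD //; first by rewrite IH.
  by apply: Pint_sum => i; exact: iphi.
exact: iphi.
Qed.

(* No measurability of [phi] is needed: the integral of a nonnegative function
   is a supremum over the simple functions below it. *)
Lemma integral_prob_le_cst (phi : T -> R) c : 0 <= c ->
  (forall x, 0 <= phi x <= c) -> (\int[P]_(x in setT) (phi x)%:E <= c%:E)%E.
Proof.
move=> c0 phi_bd; apply: (@le_trans _ _ (\int[P]_(x in setT) (cst c%:E) x)%E).
  rewrite ge0_integralTE; last by move=> x; rewrite lee_fin; case/andP: (phi_bd x).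
  rewrite ge0_integralTE; last by move=> x; rewrite lee_fin.
  apply: ereal_sup_le => _ [h h_le <-]; exists h => //= x.
  by apply: le_trans (h_le x) _; rewrite lee_fin; case/andP: (phi_bd x).
rewrite integral_cst // -[X in (_ <= X)%E]mule1.
by apply: lee_wpmul2l; rewrite ?lee_fin // -(probability_setT P).
Qed.

End Expectation.

Section VectorExpectation.
Variables (R : realType) (d : nat) (dT : measure_display) (T : measurableType dT).
Variable P : probability T R.
Local Notation V := 'rV[R]_d.
Local Notation Pint := (Pint P).

Lemma enorm_Rintegral_le (u : T -> V) K : 0 <= K ->
  (forall i, Pint (fun xi => u xi 0 i)) -> (forall xi, enorm (u xi) <= K) ->
  enorm (\row_i \int[P]_xi u xi 0 i) <= K.
Proof.
move=> K0 iu u_le; apply: enorm_le_dual => // m.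
have -> : dot m (\row_i \int[P]_xi u xi 0 i) = \int[P]_xi dot m (u xi).
  rewrite dot_row /dot Rintegral_sum; last by move=> i; apply: PintZ.
  by apply: eq_bigr => i _; rewrite RintegralZl //; exact: iu.
rewrite -[X in _ <= X](Rintegral_prob_cst P); apply: le_Rintegral => //.
- by apply: Pint_sum => i; apply: PintZ.
- exact: Pint_cst.
move=> xi _; apply: le_trans (dot_le_enorm _ _) _.
by rewrite mulrC ler_wpM2r ?enorm_ge0.
Qed.

Lemma derive_Rintegral (F : T -> V -> R) x v C :
  (forall y, Pint (fun xi => F xi y)) -> (forall xi y, derivable (F xi) y v) ->
  (forall xi y, `|'D_v (F xi) y| <= C) ->
  derivable (fun y => \int[P]_xi F xi y) x v /\
  'D_v (fun y => \int[P]_xi F xi y) x = \int[P]_xi 'D_v (F xi) x.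
Proof.
move=> iF dF DF_le; pose f (t : R) xi := F xi (t *: v + x).
have I0 : (`](-1), 1[%classic : set R) 0 by rewrite /= in_itv /= ltrN10 ltr01.
have if_ t : (`](-1), 1[%classic : set R) t -> P.-integrable setT (EFin \o f t).
  by move=> _; exact: iF.
have df t xi : (`](-1), 1[%classic : set R) t -> setT xi -> derivable (f ^~ xi) t 1.
  by move=> _ _; apply/derivable_line.
have C_ge0 xi : 0 <= cst C xi := le_trans (normr_ge0 _) (DF_le xi x).
have iC : P.-integrable setT (EFin \o cst C) by exact: Pint_cst.
have Df_le t xi : (`](-1), 1[%classic : set R) t -> setT xi ->
    `|partial1of2 f t xi| <= cst C xi.
  by move=> _ _; rewrite partial1of2E /f derive_line; exact: DF_le.
have [D1 D2] := (derivable_under_integral measurableT I0 if_ df C_ge0 iC Df_le,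
  differentiation_under_integral measurableT I0 if_ df C_ge0 iC Df_le).
split.
  have := derivable_line (fun y => \int[P]_xi F xi y) x v 0.
  by rewrite scale0r add0r => <-.
rewrite -[x in LHS](add0r x) -(scale0r v) -derive_line -derive1E D2.
by apply: eq_Rintegral => xi _; rewrite partial1of2E /f derive_line scale0r add0r.
Qed.

(* Measurability of the derivative: it is the pointwise limit of the
   difference quotients along the harmonic sequence. *)
Lemma Pint_derive (F : T -> V -> R) x v C :
  (forall y, Pint (fun xi => F xi y)) -> (forall xi, derivable (F xi) x v) ->
  (forall xi, `|'D_v (F xi) x| <= C) -> Pint (fun xi => 'D_v (F xi) x).
Proof.
move=> iF dF DF_le; apply: (@Pint_bounded _ _ _ P _ C) => //.
pose q n xi := (n.+1%:R : R) * (F xi ((n.+1%:R)^-1 *: v + x) - F xi x).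
apply: (@measurable_realfun.measurable_fun_cvg _ _ _ _ q).
  move=> n; apply: measurable_realfun.measurable_funM; first exact: measurable_cst.
  by apply: measurable_realfun.measurable_funB; apply: Pint_measurable.
move=> xi _.
have /cvgr_dnbhsP/(_ (@harmonic R)) qF :
    (fun t : R => t^-1 *: ((F xi \o shift x) (t *: v) - F xi x)) @ (0 : R)^'
    --> 'D_v (F xi) x := dF xi.
apply: cvg_trans (qF (conj (fun n => lt0r_neq0 (harmonic_gt0 n)) cvg_harmonic)).
by apply: near_eq_cvg; near=> n; rewrite /q /= invrK.
Unshelve. all: by end_near.
Qed.

Definition covmx (u : T -> V) : 'M[R]_d :=
  \matrix_(i, j) \int[P]_xi (u xi 0 i * u xi 0 j).

Section Covariance.
Variables (u : T -> V) (K : R).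
Hypothesis iu : forall i, Pint (fun xi => u xi 0 i).
Hypothesis u_le : forall xi, enorm (u xi) <= K.

Lemma Pint_mul_coord i j : Pint (fun xi => u xi 0 i * u xi 0 j).
Proof.
by apply: (PintM (iu i) (iu j)) => xi;
  apply: le_trans (normr_coord_le_enorm _ _) (u_le xi).
Qed.

Lemma dot_covmx w : dot w (w *m covmx u) = \int[P]_xi dot w (u xi) ^+ 2.
Proof.
have sqrE xi : dot w (u xi) ^+ 2 =
    \sum_(j < d) \sum_(i < d) (w 0 j * w 0 i) * (u xi 0 i * u xi 0 j).
  rewrite expr2 mulr_suml; apply: eq_bigr => j _; rewrite mulr_sumr.
  by apply: eq_bigr => i _; ring.
under [RHS]eq_Rintegral => xi _ do rewrite sqrE.
rewrite Rintegral_sum; last first.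
  by move=> j; apply: Pint_sum => i; apply: PintZ; exact: Pint_mul_coord.
apply: eq_bigr => j _; rewrite mxE mulr_sumr Rintegral_sum; last first.
  by move=> i; apply: PintZ; exact: Pint_mul_coord.
by apply: eq_bigr => i _; rewrite mxE RintegralZl ?mulrA //; exact: Pint_mul_coord.
Qed.

Lemma covmx_quad_le w : dot w (w *m covmx u) <= K ^+ 2 * dot w w.
Proof.
have dot_le xi : `|dot w (u xi)| <= enorm w * K.
  by apply: le_trans (normr_dot_le _ _) _; rewrite ler_wpM2l ?enorm_ge0.
have idot : Pint (fun xi => dot w (u xi)).
  by apply: Pint_sum => i; apply: PintZ.
rewrite dot_covmx -[X in _ <= X](Rintegral_prob_cst P); apply: le_Rintegral => //.
- have -> : (fun xi => dot w (u xi) ^+ 2) = (fun xi => dot w (u xi) * dot w (u xi)).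
    by apply/funext => xi; rewrite expr2.
  exact: (PintM idot idot dot_le dot_le).
- exact: Pint_cst.
move=> xi _; rewrite -enorm_sqr.
by have := dot_le xi; rewrite ler_norml => /andP[lo hi]; nra.
Qed.

Lemma lambda_max_covmx_le : 0 <= K -> lambda_max (covmx u) <= K ^+ 2.
Proof.
move=> K0; apply: lambda_max_le; first exact: exprn_ge0.
by move=> a ev; apply: eigenvalue_le ev covmx_quad_le.
Qed.

End Covariance.

End VectorExpectation.

Section LipschitzFamily.
Variables (R : realType) (d : nat) (dT : measure_display) (T : measurableType dT).
Variable P : probability T R.
Variables (f : T -> 'rV[R]_d -> R) (L1 L2 : R).
Hypotheses (L1_ge0 : 0 <= L1) (L2_ge0 : 0 <= L2).
Hypothesis f_diff : forall xi x, differentiable (f xi) x.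
Hypothesis grad_diff : forall xi x, differentiable (grad (f xi)) x.
Hypothesis f_int : forall x, P.-integrable setT (fun xi => (f xi x)%:E).
Hypothesis f_lip : forall xi x y, `|f xi x - f xi y| <= L1 * enorm (x - y).
Hypothesis grad_lip :
  forall xi x y, enorm (grad (f xi) x - grad (f xi) y) <= L2 * enorm (x - y).

Local Notation V := 'rV[R]_d.
Local Notation Pint := (Pint P).
Implicit Types (xi : T) (x y v w : V) (i j k : 'I_d).

Definition Ef y := \int[P]_xi f xi y.

Lemma normr_derive_f_le xi y v : `|'D_v (f xi) y| <= L1 * enorm v.
Proof.
apply: normr_derive_le => [|h _]; first exact: diff_derivable.
by apply: le_trans (f_lip _ _ _) _; rewrite addrK enormZ mulrA [X in _ <= X]mulrAC.
Qed.

Lemma enorm_grad_f_le xi y : enorm (grad (f xi) y) <= L1.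
Proof.
apply: enorm_le_dual => // m; rewrite dot_row -derive_coord_sum //.
exact: le_trans (ler_norm _) (normr_derive_f_le _ _ _).
Qed.

Lemma enorm_row_derive_partial_f_le xi y v :
  enorm (\row_i 'D_v (partial (f xi) i) y) <= L2 * enorm v.
Proof.
apply: enorm_row_derive_le => [|i|t _]; first exact: mulr_ge0 (enorm_ge0 _).
  by apply: diff_derivable; exact: differentiable_partial.
rewrite (_ : \row_i _ = grad (f xi) (t *: v + y) - grad (f xi) y).
  by apply: le_trans (grad_lip _ _ _) _; rewrite addrK enormZ mulrA [X in _ <= X]mulrAC.
by apply/rowP => i; rewrite !mxE.
Qed.

Lemma normr_derive_partial_f_le xi i y v :
  `|'D_v (partial (f xi) i) y| <= L2 * enorm v.
Proof.
have := normr_coord_le_enorm (\row_i 'D_v (partial (f xi) i) y) i; rewrite mxE.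
by move/le_trans; apply; exact: enorm_row_derive_partial_f_le.
Qed.

Lemma Pint_partial_f i y : Pint (fun xi => partial (f xi) i y).
Proof.
apply: (@Pint_derive _ _ _ _ _ _ _ _ (L1 * enorm (evec R i))) => // xi.
  exact: diff_derivable.
exact: normr_derive_f_le.
Qed.

Lemma Pint_derive_partial_f i y v : Pint (fun xi => 'D_v (partial (f xi) i) y).
Proof.
apply: (@Pint_derive _ _ _ _ _ _ _ _ (L2 * enorm v)) => [z|xi|xi].
- exact: Pint_partial_f.
- by apply: diff_derivable; exact: differentiable_partial.
- exact: normr_derive_partial_f_le.
Qed.

Lemma derive_Ef y v : derivable Ef y v /\ 'D_v Ef y = \int[P]_xi 'D_v (f xi) y.
Proof.
apply: (@derive_Rintegral _ _ _ _ _ _ _ _ (L1 * enorm v)) => // xi z.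
  exact: diff_derivable.
exact: normr_derive_f_le.
Qed.

Lemma partial_EfE i : partial Ef i = fun y => \int[P]_xi partial (f xi) i y.
Proof. by apply/funext => y; rewrite /partial (derive_Ef y _).2. Qed.

Lemma derive_partial_Ef i y v : derivable (partial Ef i) y v /\
  'D_v (partial Ef i) y = \int[P]_xi 'D_v (partial (f xi) i) y.
Proof.
rewrite partial_EfE; apply: (@derive_Rintegral _ _ _ _ _ _ _ _ (L2 * enorm v)).
- exact: Pint_partial_f.
- by move=> xi z; apply: diff_derivable; exact: differentiable_partial.
- by move=> xi z; exact: normr_derive_partial_f_le.
Qed.

Lemma enorm_grad_Ef_le y : enorm (grad Ef y) <= L1.
Proof.
rewrite (_ : grad Ef y = \row_i \int[P]_xi grad (f xi) y 0 i); last first.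
  apply/rowP => i; rewrite !mxE partial_EfE.
  by apply: eq_Rintegral => xi _; rewrite mxE.
apply: enorm_Rintegral_le => // [i|xi]; last exact: enorm_grad_f_le.
by rewrite /Pint; under eq_fun do rewrite mxE; exact: Pint_partial_f.
Qed.

Lemma enorm_row_derive_partial_Ef_le y v :
  enorm (\row_i 'D_v (partial Ef i) y) <= L2 * enorm v.
Proof.
rewrite (_ : \row_i _ = \row_i \int[P]_xi (\row_k 'D_v (partial (f xi) k) y) 0 i).
  apply: enorm_Rintegral_le => [|i|xi]; first exact: mulr_ge0 (enorm_ge0 _).
    by rewrite /Pint; under eq_fun do rewrite mxE; exact: Pint_derive_partial_f.
  exact: enorm_row_derive_partial_f_le.
apply/rowP => i; rewrite !mxE (derive_partial_Ef i y v).2.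
by apply: eq_Rintegral => xi _; rewrite mxE.
Qed.

Lemma derive_partial_Ef_coord_sum i y v :
  'D_v (partial Ef i) y = \sum_(j < d) v 0 j * 'D_(evec R j) (partial Ef i) y.
Proof.
rewrite (derive_partial_Ef i y v).2.
under eq_Rintegral => xi _ do
  rewrite (derive_coord_sum v (differentiable_partial i (grad_diff xi y))).
rewrite Rintegral_sum => [|j]; last by apply: PintZ; exact: Pint_derive_partial_f.
apply: eq_bigr => j _; rewrite RintegralZl ?(derive_partial_Ef i y _).2 //.
exact: Pint_derive_partial_f.
Qed.

Lemma hess_Ef_trmx w y : w *m (hess Ef y)^T = \row_k 'D_w (partial Ef k) y.
Proof.
apply/rowP => k; rewrite !mxE derive_partial_Ef_coord_sum.
by apply: eq_bigr => j _; rewrite !mxE.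
Qed.

(* The hessian need not be symmetric here, but its quadratic form is that of
   its transpose, whose rows are the directional derivatives of grad Ef. *)
Lemma normr_eigenvalue_hess_Ef_le y a : eigenvalue (hess Ef y) a -> `|a| <= L2.
Proof.
move=> ev; apply: normr_eigenvalue_le ev _ => w.
rewrite -dot_mulmx_trmx hess_Ef_trmx; apply: le_trans (normr_dot_le _ _) _.
rewrite -enorm_sqr expr2 mulrCA ler_wpM2l ?enorm_ge0 //.
exact: enorm_row_derive_partial_Ef_le.
Qed.

Lemma trplus_hess_Ef_le c y :
  0 <= trplus (hess (fun x => Ef x - c) y) <= d%:R * L2.
Proof.
rewrite hess_subr_cst => [|z i]; last exact: (derive_Ef z _).1.
rewrite trplus_ge0 /=; apply: trplus_le => // a; exact: normr_eigenvalue_hess_Ef_le.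
Qed.

Definition dev xi i y := partial (f xi) i y - partial Ef i y.

Definition devv xi y : V := \row_i dev xi i y.

Definition devD xi y v : V := \row_i 'D_v (dev xi i) y.

Lemma devvE xi y : devv xi y = grad (f xi) y - grad Ef y.
Proof. by apply/rowP => i; rewrite !mxE. Qed.

Lemma enorm_devv_le xi y : enorm (devv xi y) <= 2 * L1.
Proof.
rewrite devvE; apply: le_trans (enormB _ _) _.
by have := enorm_grad_f_le xi y; have := enorm_grad_Ef_le y; lra.
Qed.

Lemma normr_dev_le xi i y : `|dev xi i y| <= 2 * L1.
Proof.
have := normr_coord_le_enorm (devv xi y) i; rewrite mxE => /le_trans; apply.
exact: enorm_devv_le.
Qed.

Lemma derive_dev xi i y v : derivable (dev xi i) y v /\
  'D_v (dev xi i) y = 'D_v (partial (f xi) i) y - 'D_v (partial Ef i) y.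
Proof.
have -> : dev xi i = partial (f xi) i - partial Ef i by [].
have df : derivable (partial (f xi) i) y v.
  by apply: diff_derivable; exact: differentiable_partial.
have dEf := (derive_partial_Ef i y v).1.
by split; [exact: derivableB | exact: deriveB].
Qed.

Lemma enorm_devD_le xi y v : enorm (devD xi y v) <= 2 * L2 * enorm v.
Proof.
rewrite (_ : devD xi y v =
    \row_i 'D_v (partial (f xi) i) y - \row_i 'D_v (partial Ef i) y); last first.
  by apply/rowP => i; rewrite !mxE (derive_dev xi i y v).2.
apply: le_trans (enormB _ _) _.
rewrite (_ : 2 * L2 * enorm v = L2 * enorm v + L2 * enorm v); last by ring.
exact: lerD (enorm_row_derive_partial_f_le _ _ _) (enorm_row_derive_partial_Ef_le _ _).
Qed.

Lemma normr_derive_dev_le xi i y v : `|'D_v (dev xi i) y| <= 2 * L2 * enorm v.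
Proof.
have := normr_coord_le_enorm (devD xi y v) i; rewrite mxE => /le_trans; apply.
exact: enorm_devD_le.
Qed.

Lemma derive_dev_coord_sum xi i y v :
  'D_v (dev xi i) y = \sum_(k < d) v 0 k * 'D_(evec R k) (dev xi i) y.
Proof.
rewrite !(derive_dev xi i y _).2 derive_partial_Ef_coord_sum.
rewrite (derive_coord_sum v (differentiable_partial i (grad_diff xi y))) -sumrB.
by apply: eq_bigr => k _; rewrite (derive_dev xi i y _).2 mulrBr.
Qed.

Lemma Pint_dev i y : Pint (fun xi => dev xi i y).
Proof. by apply: PintB; [exact: Pint_partial_f | exact: Pint_cst]. Qed.

Lemma Pint_derive_dev i y v : Pint (fun xi => 'D_v (dev xi i) y).
Proof.
rewrite /Pint; under eq_fun do rewrite (derive_dev _ i y v).2.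
by apply: PintB; [exact: Pint_derive_partial_f | exact: Pint_cst].
Qed.

Lemma Pint_dev_mul_derive i j y v :
  Pint (fun xi => dev xi i y * 'D_v (dev xi j) y).
Proof.
apply: (PintM (Pint_dev i y) (Pint_derive_dev j y v)) => xi.
  exact: normr_dev_le.
exact: normr_derive_dev_le.
Qed.

Lemma derive_dev_mul xi i j y v :
  derivable (fun z => dev xi i z * dev xi j z) y v /\
  'D_v (fun z => dev xi i z * dev xi j z) y =
    dev xi i y * 'D_v (dev xi j) y + dev xi j y * 'D_v (dev xi i) y.
Proof.
have [[di _] [dj _]] := (derive_dev xi i y v, derive_dev xi j y v).
have -> : (fun z => dev xi i z * dev xi j z) = dev xi i * dev xi j by [].
split; first exact: derivableM di dj.
by rewrite (deriveM di dj).
Qed.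

Lemma normr_derive_dev_mul_le xi i j y v :
  `|'D_v (fun z => dev xi i z * dev xi j z) y| <= 8 * L1 * L2 * enorm v.
Proof.
have mul_le a b : `|a| <= 2 * L1 -> `|b| <= 2 * L2 * enorm v ->
    `|a * b| <= 4 * L1 * L2 * enorm v.
  move=> a_le b_le; rewrite normrM.
  apply: le_trans (ler_pM (normr_ge0 _) (normr_ge0 _) a_le b_le) _.
  by rewrite le_eqVlt; apply/orP; left; apply/eqP; ring.
rewrite (derive_dev_mul xi i j y v).2; apply: le_trans (ler_normD _ _) _.
rewrite (_ : 8 * L1 * L2 * enorm v = 4 * L1 * L2 * enorm v + 4 * L1 * L2 * enorm v).
  by apply: lerD; apply: mul_le; rewrite ?normr_dev_le ?normr_derive_dev_le.
by ring.
Qed.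

Lemma partial_covmx_dev i k y :
  partial (fun z => covmx P (devv ^~ z) i k) k y =
  \int[P]_xi (dev xi i y * 'D_(evec R k) (dev xi k) y +
              dev xi k y * 'D_(evec R k) (dev xi i) y).
Proof.
rewrite (_ : (fun z => _) = fun z => \int[P]_xi (dev xi i z * dev xi k z)); last first.
  by apply/funext => z; rewrite mxE; apply: eq_Rintegral => xi _; rewrite !mxE.
have iF z : Pint (fun xi => dev xi i z * dev xi k z).
  by apply: (PintM (Pint_dev i z) (Pint_dev k z)) => xi; exact: normr_dev_le.
have dF xi z := (derive_dev_mul xi i k z (evec R k)).1.
have DF xi z := normr_derive_dev_mul_le xi i k z (evec R k).
rewrite /partial; have [_ ->] := @derive_Rintegral _ _ _ _ _ _ y _ _ iF dF DF.
by apply: eq_Rintegral => xi _; rewrite (derive_dev_mul xi i k y _).2.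
Qed.

(* With J the Jacobian of the deviation, the product rule turns the i-th
   component of the divergence of covmx into E[tr(J) dev_i + (J dev)_i]. *)
Definition div_integrand xi y : V :=
  (\sum_(k < d) 'D_(evec R k) (dev xi k) y) *: devv xi y + devD xi y (devv xi y).

Lemma div_integrand_coord xi y i : div_integrand xi y 0 i =
  \sum_(k < d) (dev xi i y * 'D_(evec R k) (dev xi k) y +
                dev xi k y * 'D_(evec R k) (dev xi i) y).
Proof.
rewrite /div_integrand /devD /devv !mxE big_split /=; congr (_ + _).
  by rewrite mulr_suml; apply: eq_bigr => k _; rewrite mulrC.
by rewrite derive_dev_coord_sum; apply: eq_bigr => k _; rewrite mxE.
Qed.

Lemma mxdiv_covmx_dev y : mxdiv (fun z => covmx P (devv ^~ z)) y =
  \row_i \int[P]_xi div_integrand xi y 0 i.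
Proof.
apply/rowP => i; rewrite !mxE.
under eq_bigr => k _ do rewrite partial_covmx_dev.
rewrite -Rintegral_sum => [|k]; last by apply: PintD; exact: Pint_dev_mul_derive.
by apply: eq_Rintegral => xi _; rewrite div_integrand_coord.
Qed.

Lemma enorm_div_integrand_le xi y :
  enorm (div_integrand xi y) <= 4 * (d%:R + 1) * L1 * L2.
Proof.
have tr_le : `|\sum_(k < d) 'D_(evec R k) (dev xi k) y| <= d%:R * (2 * L2).
  apply: le_trans (ler_norm_sum _ _ _) _.
  rewrite (_ : _ * _ = \sum_(k < d) 2 * L2 * enorm (evec R k)).
    by apply: ler_sum => k _; exact: normr_derive_dev_le.
  by under eq_bigr do rewrite enorm_evec mulr1; rewrite sumr_const card_ord mulr_natl.
have jac_le : enorm (devD xi y (devv xi y)) <= 2 * L2 * (2 * L1).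
  apply: le_trans (enorm_devD_le _ _ _) _.
  by rewrite ler_wpM2l ?mulr_ge0 ?enorm_devv_le.
apply: le_trans (enormD _ _) _; rewrite enormZ.
have -> : 4 * (d%:R + 1) * L1 * L2 = d%:R * (2 * L2) * (2 * L1) + 2 * L2 * (2 * L1).
  by ring.
by apply: lerD jac_le; apply: ler_pM; rewrite ?normr_ge0 ?enorm_ge0 ?enorm_devv_le.
Qed.

Lemma enorm_mxdiv_covmx_dev_le y :
  enorm (mxdiv (fun z => covmx P (devv ^~ z)) y) <= 4 * (d%:R + 1) * L1 * L2.
Proof.
rewrite mxdiv_covmx_dev; apply: enorm_Rintegral_le => [|i|xi].
- by rewrite !mulr_ge0 // addr_ge0.
- rewrite /Pint; under eq_fun do rewrite div_integrand_coord.
  by apply: Pint_sum => k; apply: PintD; exact: Pint_dev_mul_derive.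
- exact: enorm_div_integrand_le.
Qed.

Lemma lambda_max_covmx_dev_le y : lambda_max (covmx P (devv ^~ y)) <= 4 * L1 ^+ 2.
Proof.
have -> : 4 * L1 ^+ 2 = (2 * L1) ^+ 2 by ring.
apply: lambda_max_covmx_le; last exact: mulr_ge0.
- by move=> i; rewrite /Pint; under eq_fun do rewrite mxE; exact: Pint_dev.
- by move=> xi; exact: enorm_devv_le.
Qed.

End LipschitzFamily.

Theorem lemma3 (R : realType) (d : nat)
  (dT : measure_display) (T : measurableType dT) (P : probability T R)
  (logmuxi : T -> 'rV[R]_d -> R) (L1 L2 : R) (logZ : R)
  (pit : probability (Rd R d) R) :
  0 <= L1 -> 0 <= L2 ->
  (forall xi x, differentiable (logmuxi xi) x) ->
  (forall xi x, differentiable (grad (logmuxi xi)) x) ->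
  (forall x, P.-integrable setT (fun xi => (logmuxi xi x)%:E)) ->
  (forall xi x y, `|logmuxi xi x - logmuxi xi y| <= L1 * enorm (x - y)) ->
  (forall xi x y,
     enorm (grad (logmuxi xi) x - grad (logmuxi xi) y) <= L2 * enorm (x - y)) ->
  let Elogmu := fun x : 'rV[R]_d => Rintegral P setT (fun xi => logmuxi xi x) in
  let logmu := fun x : 'rV[R]_d => Elogmu x - logZ in
  let Sigma := fun x : 'rV[R]_d =>
    \matrix_(i < d, j < d)
      Rintegral P setT (fun xi =>
        (grad (logmuxi xi) x 0 i - grad Elogmu x 0 i) *
        (grad (logmuxi xi) x 0 j - grad Elogmu x 0 j)) in
  [/\ (\int[pit]_(x in setT) (trplus (hess logmu x))%:E <= (d%:R * L2)%:E)%E,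
      (forall x, enorm (mxdiv Sigma x) <= 4 * (d%:R + 1) * L1 * L2) &
      (forall x, lambda_max (Sigma x) <= 4 * L1 ^+ 2)].
Proof.
move=> L1_ge0 L2_ge0 f_diff grad_diff f_int f_lip grad_lip Elogmu logmu Sigma.
have SigmaE : Sigma = fun x => covmx P (devv P logmuxi ^~ x).
  apply/funext => x; apply/matrixP => i j; rewrite !mxE.
  by apply: eq_Rintegral => xi _; rewrite !mxE.
rewrite SigmaE; split.
- apply: integral_prob_le_cst => [|x]; first exact: mulr_ge0.
  exact: trplus_hess_Ef_le.
- by move=> x; apply: enorm_mxdiv_covmx_dev_le.
- by move=> x; apply: lambda_max_covmx_dev_le.
Qed.
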